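(* Let $G=(V,E)$ be a directed graph with an extraction order $G^{\mathcal X}=(V,E^{\mathcal X},s)$. Suppose a node $v\in V$ separates a set of nodes $U\subset V$ from the root $s$, i.e., every path in the underlying undirected graph of $G$ from $s$ to a node of $U$ passes through $v$. Then every edge incident to $v$ and to some node $u\in U$ is oriented away from $v$ in the extraction order, i.e., it appears as $(v,u)\in E^{\mathcal X}$.
   Context: An extraction order of a directed graph $G=(V,E)$ is a rooted directed graph $G^{\mathcal X}=(V,E^{\mathcal X},s)$ with root $s\in V$ such that $G^{\mathcal X}$ is acyclic, every node is reachable from $s$, and $E^{\mathcal X}$ is obtained from $E$ by reversing the orientation of some (possibly no) edges. *)

From mathcomp Require Import all_boot.
Set Implicit Arguments. Unset Strict Implicit. Unset Printing Implicit Defensive.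

Definition reorient (V : finType) (E flip : rel V) : rel V :=
  fun x y => (E x y && ~~ flip x y) || (E y x && flip y x).

(* Acyclic directed graph: no edge (x,y) with y reaching x (includes no self-loops). *)
Definition acyclic_rel (V : finType) (R : rel V) : Prop :=
  forall x y, R x y -> ~~ connect R y x.

Definition extraction_order (V : finType) (E EX : rel V) (s : V) : Prop :=
  [/\ exists flip : rel V, EX =2 reorient E flip,
      acyclic_rel EX
    & forall x, connect EX s x].

Definition undirected (V : finType) (E : rel V) : rel V :=
  fun x y => E x y || E y x.

Definition separates (V : finType) (E : rel V) (v s : V) (U : {set V}) : Prop :=
  forall (p : seq V), path (undirected E) s p -> last s p \in U -> v \in s :: p.

From mathcomp Require Import all_boot.
Set Implicit Arguments. Unset Strict Implicit. Unset Printing Implicit Defensive.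

(* Every node of an extraction order is reachable from the root along edges of
   the underlying undirected graph, so such a path to u in U meets v, and its
   tail gives a directed path from v to u. Acyclicity then forbids the
   reversed edge (u, v), and reorienting keeps the edge between u and v in one
   of the two directions. *)

Section Reorient.

Variables (V : finType) (E flip : rel V).

Lemma reorient_undirected x y : reorient E flip x y -> undirected E x y.
Proof. by rewrite /reorient /undirected => /orP[] /andP[-> _]; rewrite ?orbT. Qed.

Lemma undirected_reorient x y :
  undirected E x y -> reorient E flip x y || reorient E flip y x.
Proof.
rewrite /reorient /undirected => /orP[] ->;
by case: (flip x y); case: (flip y x); rewrite ?orbT.
Qed.

End Reorient.

Lemma connect_mem_last (V : finType) (e : rel V) x p y :
  path e x p -> y \in x :: p -> connect e y (last x p).
Proof.
move=> e_p y_p; case/splitPl: y_p e_p => p1 p2 <-.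
rewrite cat_path last_cat => /andP[_ e_p2].
by apply/connectP; exists p2.
Qed.

Lemma separates_connect (V : finType) (E R : rel V) (s v : V) (U : {set V}) u :
  subrel R (undirected E) -> separates E v s U ->
  connect R s u -> u \in U -> connect R v u.
Proof.
move=> RE sep /connectP[p R_p ->] pU.
exact/connect_mem_last/(sep p (sub_path RE R_p) pU).
Qed.

Theorem lemma39 (V : finType) (E EX : rel V) (s v : V) (U : {set V}) :
  extraction_order E EX s ->
  separates E v s U ->
  forall u, u \in U -> (E v u || E u v) -> EX v u.
Proof.
move=> [[flip EXE] acyc reach] sep u uU Evu.
have EX_und : subrel EX (undirected E).
  by move=> x y; rewrite EXE; apply: reorient_undirected.
have vu : connect EX v u := separates_connect EX_und sep (reach u) uU.
have := undirected_reorient flip Evu; rewrite -!EXE => /orP[// | EXuv].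
by have := acyc _ _ EXuv; rewrite vu.
Qed.
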